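(* Let $\mathcal{P}$ be a partition of $\{1,\dots,n\}$. A subspace $\mathcal{U}$ of $\mathbb{R}^n$ is $\mathcal{P}$-realizable if and only if every subspace $\mathcal{U}'$ with $\mathcal{U}'\sim\mathcal{U}$ is realizable.
   Context: $G_{\mathcal{P}}$ is the group of $n\times n$ orthogonal $\mathcal{P}$-block-diagonal matrices; $\mathcal{U}\sim\mathcal{U}'$ means $\mathcal{U}'=Q\mathcal{U}$ for some $Q\in G_{\mathcal{P}}$. $\mathcal{E}_{\mathcal{P}}=\{Y\succeq0: Y_{\mathcal{I}}=I\text{ for all }\mathcal{I}\in\mathcal{P}\}$ ($Y_{\mathcal{I}}$ the principal submatrix indexed by $\mathcal{I}$); $\mathcal{U}$ is $\mathcal{P}$-realizable if some $Y\in\mathcal{E}_{\mathcal{P}}$ has nullspace containing $\mathcal{U}$. $\mathcal{U}$ is realizable if some positive semidefinite matrix with unit diagonal has nullspace containing $\mathcal{U}$. *)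

(* Subspaces of R^n are represented (mathcomp mxalgebra style)
   by matrices whose ROW SPACE is the subspace; vectors are row vectors 'rV_n. *)
From mathcomp Require Import all_boot all_order all_algebra.
From mathcomp Require Import reals.
Set Implicit Arguments. Unset Strict Implicit. Unset Printing Implicit Defensive.
Import Order.TTheory GRing.Theory Num.Theory.
Local Open Scope ring_scope.

Section Defs.
Variables (R : realType) (n : nat).

Definition psd (Y : 'M[R]_n) : Prop :=
  Y^T = Y /\ forall x : 'rV[R]_n, 0 <= (x *m Y *m x^T) 0 0.

Definition in_EP (P : {set {set 'I_n}}) (Y : 'M[R]_n) : Prop :=
  psd Y /\ forall I, I \in P -> forall i j, i \in I -> j \in I ->
    Y i j = (i == j)%:R.

Definition null_contains (Y : 'M[R]_n) m (U : 'M[R]_(m, n)) : Prop :=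
  Y *m U^T = 0.

Definition P_realizable (P : {set {set 'I_n}}) m (U : 'M[R]_(m, n)) : Prop :=
  exists Y, in_EP P Y /\ null_contains Y U.

Definition realizable m (U : 'M[R]_(m, n)) : Prop :=
  exists Y : 'M[R]_n, psd Y /\ (forall i, Y i i = 1) /\ null_contains Y U.

Definition in_GP (P : {set {set 'I_n}}) (Q : 'M[R]_n) : Prop :=
  Q *m Q^T = 1%:M /\
  forall i j, Q i j != 0 -> exists2 I, I \in P & (i \in I) && (j \in I).

(* U ~ U' : U' = Q U for some Q in G_P.  With row-vector representation the
   subspace Q U = { Q u | u in U } is the row space of U *m Q^T. *)
Definition P_equiv (P : {set {set 'I_n}}) m (U : 'M[R]_(m, n))
    m' (U' : 'M[R]_(m', n)) : Prop :=
  exists2 Q, in_GP P Q & (U' == U *m Q^T)%MS.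

End Defs.

(* Conjugation by Q in G_P preserves E_P, which gives the direct implication.
   Conversely, minimize the squared distance [defect Z] of the P-blocks of Z to
   the identity over the closed convex cone of psd Z annihilating U; a minimizer
   Zs exists by compactness of a sublevel set.  Its block residual W (the
   P-blocks of Zs - I) is symmetric and P-block-diagonal, so a Q in G_P
   diagonalizes it.  Realizability of QU gives a unit-diagonal psd Y, and
   Z := Q^T Y Q lies in the cone with <W, Z> = tr(Q W Q^T) = tr W.  The
   variational inequality <W, Zs> <= <W, Z>, with <W, Zs> = |W|^2 + tr W,
   forces W = 0, i.e. Zs lies in E_P. *)

From mathcomp Require Import all_boot all_order all_algebra.
From mathcomp Require Import boolp classical_sets reals topology normedtype.
From mathcomp Require Import matrix_normedtype derive.
From mathcomp Require Import ring lra zify.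
Set Implicit Arguments. Unset Strict Implicit. Unset Printing Implicit Defensive.
Import Order.TTheory GRing.Theory Num.Theory.
Import numFieldTopology.Exports numFieldNormedType.Exports.
Local Open Scope ring_scope.

Section RealContinuity.
Local Open Scope classical_set_scope.
Variables (R : realType) (N : nat).
Implicit Types (f g : 'rV[R]_N -> R).

Lemma continuous_add f g : continuous f -> continuous g -> continuous (fun v => f v + g v).
Proof. by move=> cf cg x; exact: (continuousD (cf x) (cg x)). Qed.

Lemma continuous_mul f g : continuous f -> continuous g -> continuous (fun v => f v * g v).
Proof. by move=> cf cg x; exact: (continuousM (cf x) (cg x)). Qed.

Lemma continuous_opp f : continuous f -> continuous (fun v => - f v).
Proof. by move=> cf x; exact: (continuousN (cf x)). Qed.

Lemma continuous_sum (I : finType) (F : I -> 'rV[R]_N -> R) :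
  (forall i, continuous (F i)) -> continuous (fun v => \sum_i F i v).
Proof.
move=> cF; suff : forall s, continuous (fun v => \sum_(i <- s) F i v) by apply.
elim=> [|a s IHs]; under eq_fun do rewrite ?big_nil ?big_cons.
  exact: cst_continuous.
exact: continuous_add.
Qed.

Lemma closed_forall_ge0 (K : Type) (g : K -> 'rV[R]_N -> R) :
  (forall k, continuous (g k)) -> closed [set v | forall k, 0 <= g k v].
Proof.
move=> cg; rewrite (_ : [set v | _] = \bigcap_(k in setT) (g k @^-1` [set x | 0 <= x])).
  by apply: closed_bigI => k _; move/continuous_closedP: (cg k); apply; exact: closed_ge.
by apply/seteqP; split=> v /= gv k; [move=> _|]; exact: gv.
Qed.

Lemma closed_forall_eq0 (K : Type) (g : K -> 'rV[R]_N -> R) :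
  (forall k, continuous (g k)) -> closed [set v | forall k, g k v = 0].
Proof.
move=> cg; rewrite (_ : [set v | _] = \bigcap_(k in setT) (g k @^-1` [set x | x = 0])).
  by apply: closed_bigI => k _; move/continuous_closedP: (cg k); apply; exact: closed_eq.
by apply/seteqP; split=> v /= gv k; [move=> _|]; exact: gv.
Qed.

Lemma bounded_closed_argmin (A : set 'rV[R]_N) f (B : R) : A !=set0 -> 0 <= B ->
  (forall v, A v -> forall j, `|v 0 j| <= B) -> closed A -> continuous f ->
  exists2 c, A c & forall v, A v -> f c <= f v.
Proof.
move=> A0 B0 Abd Acl cf.
have cpA : compact A.
  apply: bounded_closed_compact Acl; exists B; split; first exact: num_real.
  move=> M BM v Av; rewrite /Num.norm /= mx_normrE.
  apply/bigmax_leP; split=> [|[i j] _ /=]; apply: ltW; apply: le_lt_trans BM => //.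
  by rewrite (ord1 i); apply: Abd.
have [c Ac cmin] := compact_EVT_min A0 cpA (continuous_subspaceT cf).
by exists c; [rewrite inE in Ac | move=> v Av; apply: cmin; rewrite inE].
Qed.

End RealContinuity.

Section Forms.
Variables (R : realFieldType) (n : nat).
Implicit Types (x y z : 'rV[R]_n) (W : 'M[R]_n).

Definition bform W x y := (x *m W *m y^T) 0 0.
Definition dotv x y := (x *m y^T) 0 0.

Lemma dotv_bform x y : dotv x y = bform 1%:M x y.
Proof. by rewrite /bform mulmx1. Qed.

Lemma bformE W x y : bform W x y = \sum_l (\sum_k x 0 k * W k l) * y 0 l.
Proof. by rewrite /bform mxE; apply: eq_bigr => l _; rewrite !mxE. Qed.

Lemma dotvE x y : dotv x y = \sum_j x 0 j * y 0 j.
Proof. by rewrite /dotv mxE; apply: eq_bigr => l _; rewrite !mxE. Qed.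

Lemma bformDl W x y z : bform W (x + y) z = bform W x z + bform W y z.
Proof. by rewrite /bform !mulmxDl mxE. Qed.

Lemma bformDr W x y z : bform W z (x + y) = bform W z x + bform W z y.
Proof. by rewrite /bform linearD /= mulmxDr mxE. Qed.

Lemma bformZl W a x z : bform W (a *: x) z = a * bform W x z.
Proof. by rewrite /bform -!scalemxAl mxE. Qed.

Lemma bformZr W a x z : bform W z (a *: x) = a * bform W z x.
Proof. by rewrite /bform linearZ /= -scalemxAr mxE. Qed.

Lemma bformDm (A B : 'M[R]_n) x y : bform (A + B) x y = bform A x y + bform B x y.
Proof. by rewrite /bform mulmxDr mulmxDl mxE. Qed.

Lemma bformZm a (A : 'M[R]_n) x y : bform (a *: A) x y = a * bform A x y.
Proof. by rewrite /bform -scalemxAr -scalemxAl mxE. Qed.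

Lemma bform_sym W x y : W^T = W -> bform W x y = bform W y x.
Proof.
move=> WT; rewrite /bform.
have -> : (x *m W *m y^T) 0 0 = (x *m W *m y^T)^T 0 0 by rewrite [RHS]mxE.
by rewrite !trmx_mul trmxK WT mulmxA.
Qed.

Lemma bform_delta (A : 'M[R]_n) i j : bform A (delta_mx 0 i) (delta_mx 0 j) = A i j.
Proof. by rewrite /bform -rowE trmx_delta -colE !mxE. Qed.

Lemma dotv_sym x y : dotv x y = dotv y x.
Proof. by rewrite !dotv_bform bform_sym // trmx1. Qed.

Lemma dotv_ge0 x : 0 <= dotv x x.
Proof. by rewrite dotvE sumr_ge0 // => j _; rewrite -expr2 sqr_ge0. Qed.

Lemma dotv_eq0 x : (dotv x x == 0) = (x == 0).
Proof.
apply/idP/eqP=> [|->]; last by rewrite /dotv mul0mx mxE.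
rewrite dotvE psumr_eq0 => [/allP x0|j _]; last by rewrite -expr2 sqr_ge0.
apply/rowP=> j; rewrite mxE; apply/eqP.
by have := x0 j (mem_index_enum _); rewrite mulf_eq0 orbb.
Qed.

Lemma sqr_coord_le_dotv x j : x 0 j ^+ 2 <= dotv x x.
Proof.
by rewrite dotvE (bigD1 j) //= expr2 lerDl sumr_ge0 // => k _; rewrite -expr2 sqr_ge0.
Qed.

Lemma mulmx_trE p q (A : 'M[R]_(p, n)) (B : 'M[R]_(q, n)) i j :
  (A *m B^T) i j = dotv (row i A) (row j B).
Proof. by rewrite dotvE mxE; apply: eq_bigr => l _; rewrite !mxE. Qed.

End Forms.

Section QuadraticSign.
Variable R : realFieldType.
Implicit Types a b t : R.

Lemma quad_ge0_lin_eq0 a b : (forall t, 0 <= 2 * t * a + t ^+ 2 * b) -> a = 0.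
Proof.
move=> H; apply/eqP/negPn/negP => a0.
pose d := `|b| + 1; have d0 : 0 < d by rewrite ltr_pwDr.
have := H (- a / d); apply/negP; rewrite -ltNge.
have -> : 2 * (- a / d) * a + (- a / d) ^+ 2 * b = a ^+ 2 / d ^+ 2 * (b - 2 * d).
  by field; rewrite gt_eqF.
have a2 : 0 < a ^+ 2 by rewrite lt0r sqr_ge0 sqrf_eq0 a0.
rewrite pmulr_rlt0; last by rewrite divr_gt0 // exprn_gt0.
by rewrite /d; have := ler_norm b; have := normr_ge0 b; lra.
Qed.

Lemma quad_ge0_lin_ge0 a b : 0 <= b ->
  (forall t, 0 < t -> t <= 1 -> 0 <= 2 * t * a + t ^+ 2 * b) -> 0 <= a.
Proof.
move=> b0 H; rewrite leNgt; apply/negP => a0.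
pose t := - a / (b - a); have ba : 0 < b - a by lra.
have t0 : 0 < t by rewrite divr_gt0 // oppr_gt0.
have t1 : t <= 1 by rewrite ler_pdivrMr // mul1r; lra.
have tba : t * (b - a) = - a by rewrite divfK // gt_eqF.
have := H t t0 t1; rewrite (_ : _ + _ = t * (2 * a + t * b)); last by ring.
rewrite pmulr_rge0 // => h.
have : 0 <= (2 * a + t * b) * (b - a) by rewrite mulr_ge0 // ltW.
rewrite (_ : _ * _ = 2 * a * (b - a) + b * (t * (b - a))); last by ring.
by rewrite tba; nra.
Qed.

End QuadraticSign.

Section CoordinateSubspace.
Variables (F : fieldType) (n : nat).
Implicit Types (S : {set 'I_n}) (x : 'rV[F]_n).

Definition coordmx S : 'M[F]_(#|S|, n) := \matrix_(r, j) (enum_val r == j)%:R.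

Lemma row_coordmx S r : row r (coordmx S) = delta_mx 0 (enum_val r).
Proof. by apply/rowP=> j; rewrite !mxE eqxx eq_sym. Qed.

Lemma coordmx_trK S : coordmx S *m (coordmx S)^T = 1%:M.
Proof.
apply/matrixP=> r s; rewrite mxE (bigD1 (enum_val r)) //= big1 => [|j /negbTE jr].
  by rewrite !mxE eqxx mul1r addr0 (inj_eq enum_val_inj) eq_sym.
by rewrite !mxE eq_sym jr mul0r.
Qed.

Lemma mxrank_coordmx S : \rank (coordmx S) = #|S|.
Proof. by apply/eqP; apply/row_freeP; exists (coordmx S)^T; apply: coordmx_trK. Qed.

Lemma sub_coordmxP S x :
  reflect (forall j, j \notin S -> x 0 j = 0) (x <= coordmx S)%MS.
Proof.
apply: (iffP idP) => [/submxP[D ->] j jS | xS].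
  rewrite mxE big1 // => r _; rewrite mxE; case: eqP => [rj|_]; last by rewrite mulr0.
  by have := enum_valP r; rewrite rj (negbTE jS).
rewrite [x]row_sum_delta; apply: summx_sub => j _.
have [jS|/xS ->] := boolP (j \in S); last by rewrite scale0r sub0mx.
by rewrite scalemx_sub // -(enum_rankK_in jS jS) -row_coordmx row_sub.
Qed.

End CoordinateSubspace.

Section StableSubspaces.
Variables (F : fieldType) (n : nat).
Implicit Types (W : 'M[F]_n).

Lemma stablemx_cap m1 m2 (A : 'M[F]_(m1, n)) (C : 'M[F]_(m2, n)) W :
  stablemx A W -> stablemx C W -> stablemx (A :&: C)%MS W.
Proof.
move=> sAW sCW; rewrite sub_capmx.
by rewrite (submx_trans (submxMr W (capmxSl A C))) ?(submx_trans (submxMr W (capmxSr A C))).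
Qed.

Lemma stablemx_kermx_tr m (B : 'M[F]_(m, n)) W :
  W^T = W -> stablemx B W -> stablemx (kermx B^T) W.
Proof.
move=> WT /submxP[D BW]; rewrite sub_kermx -mulmxA -{1}WT -trmx_mul BW.
by rewrite trmx_mul mulmxA mulmx_ker mul0mx.
Qed.

Lemma capmx_kermx_tr_neq0 p q (A : 'M[F]_(p, n)) (B : 'M[F]_(q, n)) :
  (\rank B < \rank A)%N -> (A :&: kermx B^T)%MS != 0.
Proof.
move=> ltBA; rewrite -mxrank_eq0 -lt0n.
have := mxrank_sum_cap A (kermx B^T); rewrite mxrank_ker mxrank_tr.
have := rank_leq_col (A + kermx B^T)%MS; have := rank_leq_col B.
by lia.
Qed.

End StableSubspaces.

Section RayleighQuotient.
Local Open Scope classical_set_scope.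
Variables (R : realType) (n : nat).
Implicit Types (x y : 'rV[R]_n) (W : 'M[R]_n).

Lemma continuous_mulmx_coord p (M : 'M[R]_(n, p)) j :
  continuous (fun x : 'rV[R]_n => (x *m M) 0 j).
Proof.
under eq_fun do rewrite mxE; apply: continuous_sum => k.
by apply: continuous_mul; [exact: coord_continuous | exact: cst_continuous].
Qed.

Lemma continuous_bform W : continuous (fun x => bform W x x).
Proof.
under eq_fun do rewrite bformE; apply: continuous_sum => l.
apply: continuous_mul; last exact: coord_continuous.
apply: continuous_sum => k.
by apply: continuous_mul; [exact: coord_continuous | exact: cst_continuous].
Qed.

Lemma dotv_unit_scale y : y != 0 -> exists a : R, dotv (a *: y) (a *: y) = 1.
Proof.
move=> y0; have yy : 0 < dotv y y by rewrite lt0r dotv_eq0 y0 dotv_ge0.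
exists (Num.sqrt (dotv y y))^-1.
rewrite !dotv_bform bformZl bformZr -dotv_bform mulrA -expr2 exprVn.
by rewrite sqr_sqrtr ?ltW // mulVf ?gt_eqF.
Qed.

Lemma rayleigh_max p (V : 'M[R]_(p, n)) W : V != 0 ->
  exists c, [/\ (c <= V)%MS, dotv c c = 1 &
    forall y, (y <= V)%MS -> bform W y y <= bform W c c * dotv y y].
Proof.
move=> V0; pose D := [set x | dotv x x = 1 /\ (x <= V)%MS].
have D0 : D !=set0.
  have [a a1] : exists a, dotv (a *: nz_row V) (a *: nz_row V) = 1.
    by apply: dotv_unit_scale; rewrite nz_row_eq0.
  by exists (a *: nz_row V); split; rewrite ?scalemx_sub ?nz_row_sub.
have Dbd v : D v -> forall j, `|v 0 j| <= 1.
  case=> v1 _ j; have := sqr_coord_le_dotv v j; rewrite v1 => vj1.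
  by rewrite ler_norml; apply/andP; split; nra.
have Dcl : closed D.
  rewrite (_ : D = [set x | forall _ : unit, dotv x x - 1 = 0] `&`
                   [set x | forall j, (x *m cokermx V) 0 j = 0]).
    apply: closedI; apply: closed_forall_eq0; last exact: continuous_mulmx_coord.
    move=> _.
    apply: continuous_add; last exact: cst_continuous.
    by under eq_fun do rewrite dotv_bform; apply: continuous_bform.
  apply/seteqP; split=> x; rewrite /D /= submxE.
    by case=> -> /eqP ->; split=> [_|j]; rewrite ?subrr ?mxE.
  case=> /(_ tt)/eqP; rewrite subr_eq0 => /eqP x1 xV; split=> //.
  by apply/eqP/rowP=> j; rewrite xV mxE.
have [c [c1 cV] cmax] := bounded_closed_argmin D0 ler01 Dbd Dcl
  (continuous_opp (@continuous_bform W)).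
exists c; split=> // y yV; have [->|y0] := eqVneq y 0.
  by rewrite /bform /dotv !mul0mx !mxE mulr0.
have [a ay1] := dotv_unit_scale y0.
have := cmax _ (conj ay1 (scalemx_sub a yV)); rewrite lerN2 !bformZl !bformZr.
move: ay1; rewrite !dotv_bform !bformZl !bformZr -!dotv_bform => ay1 le_ay.
rewrite -[bform W y y]mul1r -ay1 (mulrC (bform W c c)).
rewrite (_ : _ * _ = dotv y y * (a * (a * bform W y y))); last by ring.
by rewrite ler_wpM2l ?dotv_ge0.
Qed.

Lemma sym_stablemx_eigenvector p (V : 'M[R]_(p, n)) W :
  W^T = W -> stablemx V W -> V != 0 ->
  exists x, [/\ (x <= V)%MS, dotv x x = 1 & exists lam, x *m W = lam *: x].
Proof.
move=> WT VW V0; have [c [cV c1 rayleigh]] := rayleigh_max W V0.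
pose lam := bform W c c.
have crit y : (y <= V)%MS -> bform W c y = lam * dotv c y.
  move=> yV; apply/eqP; rewrite eq_sym -subr_eq0; apply/eqP.
  apply: (@quad_ge0_lin_eq0 _ _ (lam * dotv y y - bform W y y)) => t.
  have := rayleigh (c + t *: y) (addmx_sub cV (scalemx_sub t yV)).
  rewrite !dotv_bform !(bformDl, bformDr, bformZl, bformZr) -!dotv_bform -/lam c1.
  by rewrite (bform_sym y c WT) (dotv_sym y c); lra.
pose u := c *m W + (- lam) *: c.
have uV : (u <= V)%MS by rewrite addmx_sub ?scalemx_sub ?(submx_trans (submxMr W cV)).
exists c; split=> //; exists lam; apply/eqP; rewrite -subr_eq0 -scaleNr -dotv_eq0 -/u.
rewrite {1}/u dotv_bform bformDl bformZl -!dotv_bform.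
by rewrite [dotv (c *m W) u](crit _ uV) mulNr addrN.
Qed.

End RayleighQuotient.

Section BlockSpectral.
Variables (R : realType) (n : nat) (e : rel 'I_n) (W : 'M[R]_n).
Hypotheses (e_refl : reflexive e) (e_sym : symmetric e) (e_trans : transitive e).
Hypotheses (WT : W^T = W) (W_block : forall i j, W i j != 0 -> e i j).

Definition block_eigenrows k (Q : 'M[R]_n) :=
  (forall i : 'I_n, (i < k)%N -> [/\ dotv (row i Q) (row i Q) = 1,
     (forall j, Q i j != 0 -> e i j) & exists lam, row i Q *m W = lam *: row i Q]) /\
  (forall i j : 'I_n, (i < k)%N -> (j < k)%N -> i != j -> dotv (row i Q) (row j Q) = 0).

Lemma stablemx_coordmx_class i0 : stablemx (coordmx R [set j | e i0 j]) W.
Proof.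
apply/row_subP=> r; rewrite row_mul row_coordmx -rowE; apply/sub_coordmxP=> j.
rewrite !inE mxE => i0j; apply/eqP; apply: contraNT i0j => /W_block.
by apply: e_trans; have := enum_valP r; rewrite inE.
Qed.

Lemma next_block_eigenrow (i0 : 'I_n) Q : block_eigenrows i0 Q ->
  exists x, [/\ dotv x x = 1, (forall j, x 0 j != 0 -> e i0 j),
    exists lam, x *m W = lam *: x & forall j : 'I_n, (j < i0)%N -> dotv x (row j Q) = 0].
Proof.
(* Pick an eigenvector in the class of i0 orthogonal to the earlier rows of that
   class; earlier rows of other classes are orthogonal to it by disjoint supports. *)
move=> [Qeig _].
pose S := [set j | e i0 j]; pose Sel := [set i : 'I_n | (i < i0)%N && e i0 i].
pose B := coordmx R Sel *m Q.
have rowB r : row r B = row (enum_val r) Q by rewrite row_mul row_coordmx -rowE.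
have BW : stablemx B W.
  apply/row_subP=> r; rewrite row_mul rowB.
  have : enum_val r \in Sel := enum_valP r; rewrite inE => /andP[lt_r _].
  have [_ _ [lam ->]] := Qeig _ lt_r.
  by rewrite scalemx_sub // -rowB row_sub.
have SelS : (#|Sel| < #|S|)%N by apply: proper_card; apply/properP; split;
  [apply/fintype.subsetP=> i; rewrite !inE => /andP[] | exists i0; rewrite !inE ?e_refl ?ltnn].
have V0 : (coordmx R S :&: kermx B^T)%MS != 0.
  by rewrite capmx_kermx_tr_neq0 // mxrank_coordmx (leq_ltn_trans (rank_leq_row B)).
have [x [xV x1 xeig]] := sym_stablemx_eigenvector WT
  (stablemx_cap (stablemx_coordmx_class i0) (stablemx_kermx_tr WT BW)) V0.
have xS j : x 0 j != 0 -> e i0 j.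
  have /sub_coordmxP xS0 := submx_trans xV (capmxSl _ _).
  by apply: contraR => jS; rewrite xS0 ?inE ?eqxx.
exists x; split=> // j ji0; have [i0j|i0j] := boolP (e i0 j).
  have jSel : j \in Sel by rewrite inE ji0.
  have /sub_kermxP/rowP/(_ (enum_rank_in jSel j)) := submx_trans xV (capmxSr _ _).
  rewrite mulmx_trE rowB enum_rankK_in // mxE => <-.
  by congr dotv; apply/rowP=> k; rewrite !mxE.
rewrite dotvE big1 // => l _; rewrite mxE.
have [->|/xS i0l] := eqVneq (x 0 l) 0; first by rewrite mul0r.
have [->|Qjl] := eqVneq (Q j l) 0; first by rewrite mulr0.
have [_ /(_ _ Qjl) jl _] := Qeig _ ji0.
by case/negP: i0j; apply: e_trans i0l _; rewrite e_sym.
Qed.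

Lemma block_eigenrows_exist k : (k <= n)%N -> exists Q, block_eigenrows k Q.
Proof.
elim: k => [_|k IHk lt_kn]; first by exists 0; split.
have [Q QK] := IHk (ltnW lt_kn); pose i0 := Ordinal lt_kn.
have [x [x1 xe xeig xQ]] := @next_block_eigenrow i0 Q QK.
pose Q' := \matrix_(i, j) if i == i0 then x 0 j else Q i j.
have rowQ'0 : row i0 Q' = x by apply/rowP=> j; rewrite !mxE eqxx.
have rowQ' i : i != i0 -> row i Q' = row i Q.
  by move=> /negbTE ii0; apply/rowP=> j; rewrite !mxE ii0.
have lt_k (i : 'I_n) : (i < k.+1)%N -> i != i0 -> (i < k)%N.
  by rewrite ltnS leq_eqVlt => /predU1P[ik /eqP[]|//]; apply: val_inj.
have [Qeig Qorth] := QK; exists Q'; split=> [i ik|i j ik jk ij].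
  have [ei|ii0] := eqVneq i i0.
    by rewrite ei rowQ'0; split=> // j; rewrite mxE eqxx; apply: xe.
  rewrite rowQ' //; have [Qi1 Qie Qieig] := Qeig _ (lt_k _ ik ii0); split=> // j.
  by rewrite mxE (negbTE ii0); apply: Qie.
have [ei|ii0] := eqVneq i i0.
  have ji0 : j != i0 by rewrite -ei eq_sym.
  by rewrite ei rowQ'0 rowQ' // xQ // lt_k.
have [ej|ji0] := eqVneq j i0.
  by rewrite ej rowQ'0 rowQ' // dotv_sym xQ // lt_k.
by rewrite !rowQ' // Qorth ?lt_k.
Qed.

Theorem sym_block_diagonalization : exists Q : 'M[R]_n,
  [/\ Q *m Q^T = 1%:M, (forall i j, Q i j != 0 -> e i j) &
      forall i j, i != j -> (Q *m W *m Q^T) i j = 0].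
Proof.
have [Q [Qeig Qorth]] := block_eigenrows_exist (leqnn n).
exists Q; split=> [|i j|i j ij].
- apply/matrixP=> i j; rewrite mulmx_trE !mxE.
  have [<-|ij] := eqVneq i j; first by have [] := Qeig i (ltn_ord i).
  by rewrite Qorth.
- by have [_ Qie _] := Qeig i (ltn_ord i); apply: Qie.
- rewrite mulmx_trE row_mul; have [_ _ [lam ->]] := Qeig i (ltn_ord i).
  by rewrite dotv_bform bformZl -dotv_bform Qorth ?mulr0.
Qed.

End BlockSpectral.

Section PsdMatrices.
Variables (R : realType) (n : nat).
Implicit Types (A B C Y Z : 'M[R]_n).

Lemma psd_conj (Q : 'M[R]_n) Y : psd Y -> psd (Q *m Y *m Q^T).
Proof.
case=> YT Yge0; split; first by rewrite !trmx_mul trmxK YT mulmxA.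
by move=> x; have := Yge0 (x *m Q); rewrite trmx_mul !mulmxA.
Qed.

Lemma psd_diag_ge0 Z i : psd Z -> 0 <= Z i i.
Proof. by case=> _ Zge0; rewrite -bform_delta; apply: Zge0. Qed.

Lemma psd_norm_entry_le Z i j : psd Z -> `|Z i j| <= (Z i i + Z j j) / 2.
Proof.
case=> ZT Zge0; have Zji : Z j i = Z i j by rewrite -[in LHS]ZT mxE.
have := Zge0 (delta_mx 0 i + delta_mx 0 j); have := Zge0 (delta_mx 0 i - delta_mx 0 j).
rewrite -scaleN1r /psd -/(bform _ _ _) -/(bform _ _ _).
rewrite !(bformDl, bformDr, bformZl, bformZr) !bform_delta Zji => h1 h2.
by rewrite ler_norml; apply/andP; split; lra.
Qed.

Definition frob (A B : 'M[R]_n) := \tr (A *m B^T).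

Lemma frobE A B : frob A B = \sum_i \sum_j A i j * B i j.
Proof. by apply: eq_bigr => i _; rewrite mxE; apply: eq_bigr => j _; rewrite mxE. Qed.

Lemma frobDr A B C : frob A (B + C) = frob A B + frob A C.
Proof. by rewrite /frob linearD /= mulmxDr mxtraceD. Qed.

Lemma frob1 A : frob A 1%:M = \tr A.
Proof. by rewrite /frob trmx1 mulmx1. Qed.

Lemma frob_self_ge0 A : 0 <= frob A A.
Proof.
by rewrite frobE; apply: sumr_ge0 => i _; apply: sumr_ge0 => j _; rewrite -expr2 sqr_ge0.
Qed.

Lemma sqr_entry_le_frob A i j : A i j ^+ 2 <= frob A A.
Proof.
rewrite frobE (bigD1 i) //= (bigD1 j) //= -expr2 -addrA lerDl.
have sq_ge0 (x : R) : 0 <= x * x by rewrite -expr2 sqr_ge0.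
by apply: addr_ge0; apply: sumr_ge0 => k _ //; apply: sumr_ge0.
Qed.

Lemma frob_self_eq0 A : frob A A = 0 -> A = 0.
Proof.
move=> A0; apply/matrixP=> i j; apply/eqP; rewrite mxE -sqrf_eq0 eq_le sqr_ge0 andbT.
by rewrite -A0 sqr_entry_le_frob.
Qed.

Lemma frob_conj (Q D Z : 'M[R]_n) :
  frob (Q^T *m D *m Q) Z = frob D (Q *m Z *m Q^T).
Proof.
rewrite /frob -!mulmxA [LHS]mxtrace_mulC !trmx_mul !trmxK.
by rewrite !mulmxA.
Qed.

Lemma frob_diag (D Z : 'M[R]_n) : (forall i j, i != j -> D i j = 0) ->
  (forall i, Z i i = 1) -> frob D Z = \tr D.
Proof.
move=> Ddiag Z1; rewrite frobE; apply: eq_bigr => i _.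
rewrite (bigD1 i) //= Z1 mulr1 big1 ?addr0 // => j ji.
by rewrite Ddiag ?mul0r // eq_sym.
Qed.

End PsdMatrices.

Section ConeMinimization.
Local Open Scope classical_set_scope.
Variables (R : realType) (n m : nat) (U : 'M[R]_(m, n)) (e : rel 'I_n).
Hypothesis e_refl : reflexive e.
Implicit Types (A B Z : 'M[R]_n).

Definition null_psd Z := psd Z /\ null_contains Z U.

Lemma null_psd_conic a b A B : 0 <= a -> 0 <= b ->
  null_psd A -> null_psd B -> null_psd (a *: A + b *: B).
Proof.
move=> a0 b0 [[AT Age0] AU] [[BT Bge0] BU]; split; first split.
- by rewrite linearD !linearZ /= AT BT.
- move=> x; rewrite -/(bform _ x x) bformDm !bformZm.
  by rewrite addr_ge0 // mulr_ge0 //; [apply: Age0 | apply: Bge0].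
- by rewrite /null_contains mulmxDl -!scalemxAl AU BU !scaler0 addr0.
Qed.

Definition residual Z : 'M[R]_n :=
  \matrix_(i, j) if e i j then Z i j - (i == j)%:R else 0.

Definition defect Z := frob (residual Z) (residual Z).

Lemma residual_eq0 Z i j : ~~ e i j -> residual Z i j = 0.
Proof. by rewrite mxE => /negbTE ->. Qed.

Lemma frob_residual_self Z : frob (residual Z) Z = defect Z + \tr (residual Z).
Proof.
rewrite -frob1 -frobDr !frobE; apply: eq_bigr => i _; apply: eq_bigr => j _.
by rewrite !mxE; case: (e i j); rewrite ?mul0r //; ring.
Qed.

Lemma defect_segment Zs Z t : defect ((1 - t) *: Zs + t *: Z) =
  defect Zs + 2 * t * (frob (residual Zs) Z - frob (residual Zs) Zs) +
  t ^+ 2 * frob (residual Z - residual Zs) (residual Z - residual Zs).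
Proof.
rewrite /defect !frobE -sumrB !mulr_sumr -!big_split; apply: eq_bigr => i _.
rewrite -sumrB !mulr_sumr -!big_split; apply: eq_bigr => j _.
by rewrite !mxE; case: (e i j) => /=; ring.
Qed.

Lemma continuous_vec_mx_entry i j :
  continuous (fun v : 'rV[R]_(n * n) => vec_mx v i j).
Proof. by under eq_fun do rewrite mxE; apply: coord_continuous. Qed.

Lemma continuous_defect : continuous (fun v => defect (vec_mx v)).
Proof.
under eq_fun do rewrite /defect frobE.
apply: continuous_sum => i; apply: continuous_sum => j.
have cres : continuous (fun v => residual (vec_mx v) i j).
  under eq_fun do rewrite mxE; case: (e i j); last exact: cst_continuous.
  by apply: continuous_add; [exact: continuous_vec_mx_entry | exact: cst_continuous].
exact: continuous_mul.
Qed.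

Lemma closed_null_psd_sublevel (d : R) :
  closed [set v | null_psd (vec_mx v) /\ defect (vec_mx v) <= d].
Proof.
have centry := continuous_vec_mx_entry.
have ccst (c : R) : continuous (fun _ : 'rV[R]_(n * n) => c) by exact: cst_continuous.
rewrite (_ : [set v | _] =
  [set v | forall ij : 'I_n * 'I_n, vec_mx v ij.1 ij.2 - vec_mx v ij.2 ij.1 = 0] `&`
  [set v | forall x : 'rV[R]_n, 0 <= bform (vec_mx v) x x] `&`
  [set v | forall ik : 'I_n * 'I_m, (vec_mx v *m U^T) ik.1 ik.2 = 0] `&`
  [set v | forall _ : unit, 0 <= d - defect (vec_mx v)]).
  apply: closedI; first apply: closedI; first apply: closedI.
  - apply: closed_forall_eq0 => -[i j].
    by apply: continuous_add; [|apply: continuous_opp]; apply: centry.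
  - apply: closed_forall_ge0 => x; under eq_fun do rewrite bformE.
    apply: continuous_sum => l; apply: continuous_mul => //.
    by apply: continuous_sum => k; apply: continuous_mul.
  - apply: closed_forall_eq0 => -[i k]; under eq_fun do rewrite mxE.
    by apply: continuous_sum => l; apply: continuous_mul.
  - apply: closed_forall_ge0 => _.
    by apply: continuous_add => //; apply: continuous_opp continuous_defect.
apply/seteqP; split=> v /=.
  case=> -[[ZT Zge0] ZU] Zd; split; first split; first split.
  - by move=> [i j] /=; rewrite -[in X in _ - X]ZT [X in _ - X]mxE subrr.
  - exact: Zge0.
  - by move=> [i k]; rewrite ZU mxE.
  - by move=> _; rewrite subr_ge0.
case=> -[[ZT Zge0] ZU] Zd; split; first split; first split.
- by apply/matrixP=> i j; rewrite mxE; apply/eqP; rewrite eq_sym -subr_eq0 (ZT (i, j)).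
- exact: Zge0.
- by apply/matrixP=> i k; rewrite (ZU (i, k)) mxE.
- by rewrite -subr_ge0; apply: Zd.
Qed.

Lemma exists_defect_min :
  exists2 Zs, null_psd Zs & forall Z, null_psd Z -> defect Zs <= defect Z.
Proof.
pose A := [set v | null_psd (vec_mx v) /\ defect (vec_mx v) <= defect 0].
have null_psd0 : null_psd 0.
  split; last by rewrite /null_contains mul0mx.
  by split=> [|x]; rewrite ?trmx0 // mulmx0 mul0mx mxE.
have A0 : A !=set0 by exists 0; rewrite /A /= linear0.
have Abd v : A v -> forall k, `|v 0 k| <= defect 0 + 2.
  case=> -[Zpsd _] Zd k; case/mxvec_indexP: k => i j.
  rewrite (_ : v 0 _ = vec_mx v i j); last by rewrite mxE.
  have Zdiag l : vec_mx v l l <= defect 0 + 2.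
    have := sqr_entry_le_frob (residual (vec_mx v)) l l; rewrite mxE e_refl eqxx /=.
    have := psd_diag_ge0 l Zpsd; have := frob_self_ge0 (residual 0); rewrite -/(defect _).
    by move: Zd; rewrite /defect; nra.
  by apply: le_trans (psd_norm_entry_le i j Zpsd) _; have := Zdiag i; have := Zdiag j; lra.
have B0 : 0 <= defect 0 + 2 by rewrite addr_ge0 ?frob_self_ge0.
have [c [cZ _] cmin] := bounded_closed_argmin A0 B0 Abd
  (@closed_null_psd_sublevel _) continuous_defect.
exists (vec_mx c) => // Z Z_null; have [le_Z0|lt0Z] := leP (defect Z) (defect 0).
  by have := cmin (mxvec Z); rewrite /A /= !mxvecK; apply.
by apply: le_trans (ltW lt0Z); have := cmin 0; rewrite /A /= linear0; apply.
Qed.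

Lemma defect_min_variational Zs : null_psd Zs ->
  (forall Z, null_psd Z -> defect Zs <= defect Z) ->
  forall Z, null_psd Z -> frob (residual Zs) Zs <= frob (residual Zs) Z.
Proof.
move=> Zs_null Zs_min Z Z_null; rewrite -subr_ge0.
apply: (quad_ge0_lin_ge0 (frob_self_ge0 (residual Z - residual Zs))) => t t0 t1.
have t1' : 0 <= 1 - t by rewrite subr_ge0.
have := Zs_min _ (null_psd_conic t1' (ltW t0) Zs_null Z_null).
by rewrite defect_segment -addrA lerDl.
Qed.

End ConeMinimization.

(* Make [partition], [cover] and [pblock] refer to finset again rather than to
   their classical_sets homonyms. *)
From mathcomp Require Import finset.

Section Realizability.
Variables (R : realType) (n : nat) (P : {set {set 'I_n}}).
Hypothesis hP : partition P [set: 'I_n].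

Definition same_block (i j : 'I_n) := pblock P i == pblock P j.

Let coverP : cover P = [set: 'I_n]. Proof. by case/and3P: hP => /eqP. Qed.
Let trivP : trivIset P. Proof. by case/and3P: hP. Qed.

Lemma pblock_in i : pblock P i \in P.
Proof. by rewrite pblock_mem // coverP inE. Qed.

Lemma same_blockE i j : same_block i j = (j \in pblock P i).
Proof. by rewrite /same_block eq_pblock // coverP inE. Qed.

Lemma same_block_refl : reflexive same_block.
Proof. by move=> i; rewrite /same_block. Qed.

Lemma same_block_sym : symmetric same_block.
Proof. by move=> i j; rewrite /same_block eq_sym. Qed.

Lemma same_block_trans : transitive same_block.
Proof. by move=> j i k; rewrite /same_block => /eqP ->. Qed.

Lemma same_block_of I i j : I \in P -> i \in I -> j \in I -> same_block i j.
Proof.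
by move=> IP iI jI; rewrite /same_block (def_pblock trivP IP iI) (def_pblock trivP IP jI).
Qed.

Lemma GP_same_block (Q : 'M[R]_n) i j : in_GP P Q -> Q i j != 0 -> same_block i j.
Proof. by case=> _ QP /QP[I IP /andP[iI jI]]; apply: same_block_of IP iI jI. Qed.

Lemma EP_same_block (Y : 'M[R]_n) i j : in_EP P Y -> same_block i j -> Y i j = (i == j)%:R.
Proof.
case=> _ YP; rewrite same_blockE => jPi; apply: YP (pblock_in i) _ _ _ jPi.
by rewrite mem_pblock coverP inE.
Qed.

Lemma GP_conj_EP_diag (Q Y : 'M[R]_n) i :
  in_GP P Q -> in_EP P Y -> (Q *m Y *m Q^T) i i = 1.
Proof.
move=> Q_GP Y_EP; have [QQ _] := Q_GP.
have QiY l : same_block i l -> (row i Q *m Y) 0 l = Q i l.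
  move=> il; rewrite mxE (bigD1 l) //= big1 => [|k kl].
    by rewrite mxE (EP_same_block Y_EP (same_block_refl l)) eqxx mulr1 addr0.
  rewrite mxE; have [->|/(GP_same_block Q_GP) ik] := eqVneq (Q i k) 0; first by rewrite mul0r.
  have kl' : same_block k l by apply: same_block_trans il; rewrite same_block_sym.
  by rewrite (EP_same_block Y_EP kl') (negbTE kl) mulr0.
transitivity ((Q *m Q^T) i i); last by rewrite QQ mxE eqxx.
rewrite !mulmx_trE row_mul !dotvE; apply: eq_bigr => l _; rewrite [row i Q 0 l]mxE.
by have [->|/(GP_same_block Q_GP)/QiY ->] := eqVneq (Q i l) 0; rewrite ?mulr0.
Qed.

Lemma realizable_of_P_equiv m (U : 'M[R]_(m, n)) m' (U' : 'M[R]_(m', n)) :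
  P_realizable P U -> P_equiv P U U' -> realizable U'.
Proof.
case=> Y [Y_EP YU] [Q Q_GP /andP[/submxP[D ->] _]].
exists (Q *m Y *m Q^T); split; first exact: psd_conj Y_EP.1.
split=> [i|]; first exact: GP_conj_EP_diag.
have QtQ : Q^T *m Q = 1%:M by apply: mulmx1C; case: Q_GP.
rewrite /null_contains !trmx_mul trmxK !mulmxA -(mulmxA _ Q^T) QtQ mulmx1.
by rewrite -(mulmxA _ Y) YU mulmx0 mul0mx.
Qed.

Lemma GP_diagonalization (W : 'M[R]_n) : W^T = W ->
  (forall i j, W i j != 0 -> same_block i j) ->
  exists2 Q, in_GP P Q & forall i j, i != j -> (Q *m W *m Q^T) i j = 0.
Proof.
move=> WT W_block; have [Q [QQ Q_block Q_diag]] := sym_block_diagonalization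
  same_block_refl same_block_sym same_block_trans WT W_block.
exists Q => //; split=> // i j /Q_block; rewrite same_blockE => jPi.
by exists (pblock P i); rewrite ?pblock_in // jPi mem_pblock coverP inE.
Qed.

Lemma in_EP_of_residual_eq0 (Z : 'M[R]_n) : psd Z -> residual same_block Z = 0 -> in_EP P Z.
Proof.
move=> Zpsd /matrixP Z0; split=> // I IP i j iI jI; have := Z0 i j.
by rewrite !mxE (same_block_of IP iI jI) => /eqP; rewrite subr_eq0 => /eqP.
Qed.

Lemma P_realizable_of_equiv m (U : 'M[R]_(m, n)) :
  (forall m' (U' : 'M[R]_(m', n)), P_equiv P U U' -> realizable U') -> P_realizable P U.
Proof.
move=> equiv_realizable.
have [Zs Zs_null Zs_min] := exists_defect_min U same_block_refl.
pose W := residual same_block Zs.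
have WT : W^T = W.
  apply/matrixP=> i j; rewrite !mxE same_block_sym eq_sym.
  by rewrite -[in LHS]Zs_null.1.1 mxE.
have [Q Q_GP Q_diag] : exists2 Q, in_GP P Q & forall i j, i != j -> (Q *m W *m Q^T) i j = 0.
  by apply: GP_diagonalization WT _ => i j; apply: contraR => /(residual_eq0 Zs) ->.
have [QQ _] := Q_GP; have QtQ : Q^T *m Q = 1%:M := mulmx1C QQ.
have [Y [Ypsd [Y1 YU]]] : realizable (U *m Q^T).
  by apply: equiv_realizable; exists Q => //; apply/eqmxP.
pose Z := Q^T *m Y *m Q.
have Z_null : null_psd U Z.
  split; first by have := psd_conj Q^T Ypsd; rewrite trmxK.
  by move: YU; rewrite /null_contains trmx_mul trmxK -!mulmxA => ->; rewrite mulmx0.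
have QZQ : Q *m Z *m Q^T = Y by rewrite /Z !mulmxA QQ mul1mx -mulmxA QQ mulmx1.
pose D := Q *m W *m Q^T.
have WD : W = Q^T *m D *m Q by rewrite /D !mulmxA QtQ mul1mx -mulmxA QtQ mulmx1.
have trWZ : frob W Z = \tr W.
  by rewrite {1}WD frob_conj QZQ frob_diag // WD [RHS]mxtrace_mulC mulmxA QQ mul1mx.
have := defect_min_variational Zs_null Zs_min Z_null.
rewrite frob_residual_self -/W trWZ gerDr => defect_le0.
exists Zs; split; last exact: Zs_null.2.
apply: in_EP_of_residual_eq0 Zs_null.1 _; apply: frob_self_eq0.
by apply/eqP; rewrite eq_le defect_le0 frob_self_ge0.
Qed.

End Realizability.

Theorem theorem5p7 (R : realType) (n : nat) (P : {set {set 'I_n}})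
  (hP : partition P [set: 'I_n]) (m : nat) (U : 'M[R]_(m, n)) :
  P_realizable P U <->
  (forall (m' : nat) (U' : 'M[R]_(m', n)), P_equiv P U U' -> realizable U').
Proof.
split=> [U_P m' U'|]; first exact: realizable_of_P_equiv.
exact: P_realizable_of_equiv.
Qed.
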